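(* For every integer $n\ge2$, $$F_{n-2}=\sum_{(a_1,\dots,a_k)\in C(n)}\Bigl\lfloor\frac{a_1-1}{2}\Bigr\rfloor\cdots\Bigl\lfloor\frac{a_k-1}{2}\Bigr\rfloor.$$
   Context: $C(n)$ is the set of all compositions $(a_1,\dots,a_k)$ of $n$ (sequences of positive integers with sum $n$, any number of parts). Fibonacci numbers: $F_0=0$, $F_1=1$, $F_n=F_{n-1}+F_{n-2}$. *)

From mathcomp Require Import all_boot.
Set Implicit Arguments. Unset Strict Implicit. Unset Printing Implicit Defensive.

Fixpoint fib (n : nat) : nat :=
  match n with
  | 0 => 0
  | 1 => 1
  | (m.+1 as k).+1 => fib k + fib m
  end.

Definition is_composition (n : nat) (s : seq nat) : bool :=
  all (fun a => 0 < a) s && (sumn s == n).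

Fixpoint seqs_len (m k : nat) : seq (seq nat) :=
  match k with
  | 0 => [:: [::]]
  | k'.+1 => [seq a :: t | a <- iota 0 m, t <- seqs_len m k']
  end.

(* C(n): all compositions of n, listed without repetition.  Every composition
   of n has at most n parts, each at most n, so it appears in this candidate
   list exactly once. *)
Definition compositions (n : nat) : seq (seq nat) :=
  [seq s <- flatten [seq seqs_len n.+1 k | k <- iota 0 n.+1] | is_composition n s].

From mathcomp Require Import all_boot zify.

(* Let fibT n be the claimed total weight of the
   compositions of n: fibT 0 = 1 (the empty composition) and
   fibT n = F_(n-2) for n > 0.

   Splitting off the first part, the true total weight obeys, for n > 0,
       total n = sum_(a <= n) weight a * total (n - a).
   We first show that fibT obeys the same recurrence: as
   weight (a+2) = weight a + [a > 0], the convolution at n+2 is the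
   convolution at n plus the prefix sum fibT 0 + ... + fibT (n-1), and by the
   Fibonacci recurrence such prefix sums are again values of fibT. *)

Definition weight (a : nat) : nat := (a - 1) %/ 2.
Definition fibT (n : nat) : nat := if n is 0 then 1 else fib (n - 2).

Lemma fibT_SS n : fibT n.+2 = fib n.
Proof. by rewrite /fibT !subSS subn0. Qed.

Lemma weight_SS a : weight a.+2 = weight a + (0 < a).
Proof. rewrite /weight; case: a => [|a] //=; lia. Qed.

Definition conv (n : nat) : nat := \sum_(a < n.+1) weight a * fibT (n - a).

(* Shifting by 2: weight_SS splits the convolution into the convolution at n
   and the prefix sum of fibT (the parts 0, 1, 2 have weight 0). *)
Lemma conv_shift n : conv n.+2 = conv n + \sum_(j < n) fibT j.
Proof.
rewrite /conv !big_ord_recl /= !mul0n !add0n.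
under eq_bigr => i _ do rewrite !subSS weight_SS mulnDl.
rewrite big_split /=; congr (_ + _).
rewrite (reindex_inj rev_ord_inj); apply: eq_bigr => j _ /=.
rewrite mul1n /bump; congr fibT; have := ltn_ord j; lia.
Qed.

Lemma fibT_prefix_sum n : 0 < n -> \sum_(j < n.+1) fibT j = fibT n.+2.
Proof.
elim: n => [//|[|n] IH _]; first by rewrite !big_ord_recr big_ord0.
by rewrite big_ord_recr IH // !fibT_SS.
Qed.

Lemma conv_fibT n : 0 < n -> conv n = fibT n.
Proof.
elim/ltn_ind: n => -[//|[|[|n]]] IH _; try by rewrite /conv !big_ord_recr big_ord0.
by rewrite conv_shift IH // -fibT_prefix_sum // [RHS]big_ord_recr addnC.
Qed.

Definition wsum (m k n : nat) : nat :=
  \sum_(s <- seqs_len m k | is_composition n s) \prod_(a <- s) weight a.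

Lemma wsum_nil m n : wsum m 0 n = (n == 0).
Proof. by rewrite /wsum big_cons big_nil /is_composition /= big_nil; case: n. Qed.

Lemma is_composition_cons n a t :
  0 < a <= n -> is_composition n (a :: t) = is_composition (n - a) t.
Proof.
move=> /andP [a_gt0 a_le_n]; rewrite /is_composition /= a_gt0; congr andb.
apply/eqP/eqP; lia.
Qed.

Lemma wsum_cons m k n :
  wsum m k.+1 n = \sum_(0 <= a < m | a <= n) weight a * wsum m k (n - a).
Proof.
rewrite /wsum /= big_flatten /= big_map [RHS]big_mkcond /=.
have -> : iota 0 m = index_iota 0 m by rewrite /index_iota subn0.
apply: eq_bigr => a _; rewrite big_map.
have [->|a_gt0] := posnP a.
  by rewrite mul0n; apply: big1 => s _; rewrite big_cons mul0n.
have [a_le_n|n_lt_a] := leqP a n.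
  rewrite big_distrr /=; apply: eq_big => [s|s _]; last by rewrite big_cons.
  by rewrite is_composition_cons // a_gt0 a_le_n.
by apply: big1 => s; rewrite /is_composition /= => /andP [_ /eqP]; lia.
Qed.

Lemma wsum_too_many_parts m k n : n < k -> wsum m k n = 0.
Proof.
elim: k n => [//|k IH] n n_lt_k; rewrite wsum_cons; apply: big1 => a a_le_n.
have [->|a_gt0] := posnP a; first by rewrite mul0n.
by rewrite IH ?muln0 //; lia.
Qed.

(* Total weight of the compositions of n with fewer than m parts, all below m;
   for n < m these are all compositions of n. *)
Definition wtotal (m n : nat) : nat := \sum_(k < m) wsum m k n.

Lemma wtotal_first_part m n : 0 < n -> n < m ->
  wtotal m n = \sum_(0 <= a < m | a <= n) weight a * wtotal m (n - a).
Proof.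
case: m => [//|m] n_gt0 n_lt_m.
rewrite /wtotal big_ord_recl wsum_nil eqn0Ngt n_gt0 add0n.
under [LHS]eq_bigr => k _ do rewrite lift0 wsum_cons.
rewrite exchange_big /=; apply: eq_bigr => a a_le_n; rewrite -big_distrr /=.
have [->|a_gt0] := posnP a; first by rewrite !mul0n.
rewrite [in RHS]big_ord_recr /= [wsum _ m _]wsum_too_many_parts ?addn0 //.
by lia.
Qed.

(* Both sides satisfy the same recurrence, hence agree. *)
Lemma wtotal_fibT m n : n < m -> wtotal m n = fibT n.
Proof.
elim/ltn_ind: n => n IH n_lt_m.
have [n0|n_gt0] := posnP n.
  rewrite n0 /wtotal; case: m n_lt_m {IH} => [//|m] _.
  by rewrite big_ord_recl wsum_nil big1 // => k _; rewrite wsum_too_many_parts.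
rewrite wtotal_first_part // -conv_fibT // /conv.
rewrite -(big_mkord xpredT (fun a => weight a * fibT (n - a))).
rewrite (big_nat_widen _ _ _ _ _ n_lt_m).
apply: eq_bigr => a a_le_n; have [->|a_gt0] := posnP a; first by rewrite !mul0n.
by rewrite IH //; lia.
Qed.

(* C(n) is enumerated by lengths k <= n and entry bound n + 1. *)
Theorem mainTheorem15 (n : nat) : 2 <= n ->
  fib (n - 2) = \sum_(s <- compositions n) \prod_(a <- s) ((a - 1) %/ 2).
Proof.
move=> n_ge2; have := @wtotal_fibT n.+1 n (ltnSn n).
rewrite /fibT; case: n n_ge2 => [//|n] _ <-.
rewrite /compositions big_filter big_flatten big_map.
by rewrite -[iota 0 n.+2]/(index_iota 0 n.+2) big_mkord.
Qed.
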